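(* Let $n\ge2$, let $\alpha_1,\dots,\alpha_n>0$, and let $A$ be the symmetric $n\times n$ real matrix with $A_{ii}=1$, $A_{i,i+1}=A_{i+1,i}=-\alpha_i$ for $1\le i\le n-1$, $A_{1,n}=A_{n,1}=-\alpha_n$, and all other entries $0$. Let $\lambda_{\min}$ be the smallest eigenvalue of $A$ and $M=\max\{\alpha_i+\alpha_{i+1}: i=1,\dots,n\}$ (indices modulo $n$). Then: (i) $\lambda_{\min}\ge1-M$; in particular $A$ is positive definite if $M<1$; (ii) $\lambda_{\min}=1-M$ if and only if $\alpha_i=\alpha_{i+2}$ for all $i$ (modulo $n$); (iii) if $n\ge4$, $\alpha_1=\dots=\alpha_{n-1}=\alpha$ and $\alpha_n=\beta$, then $\lambda_{\min}\ge\lambda$ for every real $\lambda$ with $\lambda\le1-2\alpha$, $\lambda<1-\beta$ and $\alpha^2\le(1-\alpha-\lambda)(1-\beta-\lambda)$; in particular $A$ is positive definite if $\alpha<\tfrac12$, $\beta<1$ and $\alpha^2<(1-\alpha)(1-\beta)$. *)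

From HB Require Import structures.
From mathcomp Require Import all_boot all_order all_algebra.
From mathcomp Require Import reals.
Set Implicit Arguments. Unset Strict Implicit. Unset Printing Implicit Defensive.
Import Order.TTheory GRing.Theory Num.Theory.
Local Open Scope ring_scope.

(* Paper index i
   corresponds to ordinal i-1; alpha_n sits on the edge (n-1,0). *)
Definition cycA (R : realType) (n : nat) (alpha : 'I_n -> R) : 'M[R]_n :=
  \matrix_(i, j) ((i == j)%:R
     - \sum_(k < n) (alpha k * ((i == k) && (j == ordS k))%:R
                     + alpha k * ((j == k) && (i == ordS k))%:R)).

(* M = max_i (alpha_i + alpha_{i+1}) (indices mod n); the alphas are positive
   so the initial value 0 is harmless. *)
Definition maxPair (R : realType) (n : nat) (alpha : 'I_n -> R) : R :=
  \big[Num.max/0]_(i < n) (alpha i + alpha (ordS i)).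

Definition is_min_eigenvalue (R : realType) (n : nat) (A : 'M[R]_n) (l : R) :=
  eigenvalue A l /\ forall m : R, eigenvalue A m -> l <= m.

Definition posdef (R : realType) (n : nat) (A : 'M[R]_n) :=
  forall v : 'rV[R]_n, v != 0 -> 0 < (v *m A *m v^T) ord0 ord0.

(* Write Q(v) = v A v^T = |v|^2 - 2 sum_k alpha_k v_k v_(k+1).  For positive
   weights t_k, completing squares edge by edge gives
     c |v|^2 - 2 sum_k alpha_k v_k v_(k+1)
       = sum_k alpha_k / t_k (t_k v_k - v_(k+1))^2
       + sum_k (c - alpha_k / t_k - alpha_(k+1) t_(k+1)) v_(k+1)^2,
   so Q(v) >= (1 - c) |v|^2 whenever every node satisfies
   alpha_k / t_k + alpha_(k+1) t_(k+1) <= c.  Since A is real symmetric it has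
   real eigenvalues, and such a bound is a lower bound for all of them.
   - (i): t = 1 and c = M.
   - (ii): for an eigenvector of 1 - M both sums vanish, so v is constant and
     nonzero and alpha_k + alpha_(k+1) = M for all k; conversely, in the
     2-periodic case the constant vector is an eigenvector for 1 - M.
   - (iii): weights differing from 1 only on the two edges next to the
     beta-edge. *)

From HB Require Import structures.
From mathcomp Require Import all_boot all_order all_algebra.
From mathcomp Require Import reals.
From mathcomp Require Import complex spectral polyrcf.
From mathcomp Require Import lra ring zify.
Set Implicit Arguments. Unset Strict Implicit. Unset Printing Implicit Defensive.
Import Order.TTheory GRing.Theory Num.Theory.
Local Open Scope ring_scope.
Local Open Scope sesquilinear_scope.

Lemma hermitian_eigenvalue_real (C : numClosedFieldType) n (A : 'M[C]_n) z :
  A^t* = A -> eigenvalue A z -> z \is Num.real.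
Proof.
move=> hermA /eigenvalueP [v vA vn0]; apply/CrealP.
have conj11 (M : 'M[C]_1) : (M 0 0)^* = (M^t*) 0 0 by rewrite !mxE.
pose s := (v *m v^t*) 0 0.
have s_neq0 : s != 0 by rewrite /s -dotmxE (dnorm_eq0 (@dotmx C n)).
have s_conj : s^* = s by rewrite conj11 trmx_mul map_mxM trmxCK.
have qE : (v *m A *m v^t*) 0 0 = z * s by rewrite vA -scalemxAl mxE.
have : (z * s)^* = z * s.
  by rewrite -qE conj11 !trmx_mul !map_mxM trmxCK hermA mulmxA.
by rewrite rmorphM /= s_conj => /(mulIf s_neq0).
Qed.

Lemma symmetric_eigenvalue_exists (R : rcfType) n (A : 'M[R]_n) :
  (0 < n)%N -> A^T = A -> exists a, eigenvalue A a.
Proof.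
move=> n0 symA; pose AC := map_mx (real_complex R) A.
have [z eig_z] := eigenvalue_closed AC n0.
have hermAC : AC^t* = AC.
  rewrite map_trmx symA -map_mx_comp.
  by apply/matrixP => i j; rewrite !mxE; exact: conjc_real.
have [a za] := complex_realP _ (hermitian_eigenvalue_real hermAC eig_z).
by exists a; move: eig_z; rewrite za !eigenvalue_root_char -map_char_poly fmorph_root.
Qed.

Lemma min_eigenvalue_exists (R : realType) n (A : 'M[R]_n) :
  (exists a, eigenvalue A a) -> exists l, is_min_eigenvalue A l.
Proof.
move=> [a eig_a].
have pA_neq0 : char_poly A != 0 by rewrite monic_neq0 // char_poly_monic.
have rootsE x : (x \in rootsR (char_poly A)) = eigenvalue A x.
  by rewrite -(roots_on_rootsR pA_neq0) eigenvalue_root_char in_itv.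
have := sorted_roots (- cauchy_bound (char_poly A)) (cauchy_bound (char_poly A)).
move/(_ (char_poly A)); rewrite -/(rootsR _); move: rootsE.
case: (rootsR _) => [|l s] rootsE sorted_ls.
  by move: eig_a; rewrite -rootsE.
exists l; split=> [|m]; first by rewrite -rootsE mem_head.
rewrite -rootsE inE => /predU1P [-> //|m_s].
by apply/ltW; move: m_s; apply/allP/(order_path_min lt_trans sorted_ls).
Qed.

Section QuadraticFormBound.
Variables (R : realType) (n : nat) (A : 'M[R]_n).
Local Notation qform v := ((v *m A *m v^T) 0 0).
Local Notation sumsq v := (\sum_i v 0 i ^+ 2).

Lemma sumsq_gt0 (v : 'rV[R]_n) : v != 0 -> 0 < sumsq v.
Proof.
move=> vn0; rewrite lt_def sumr_ge0 ?andbT => [|i _]; last exact: sqr_ge0.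
apply: contraNneq vn0 => /eqP; rewrite psumr_eq0 => [/allP v0|i _]; last exact: sqr_ge0.
apply/eqP/rowP => i; rewrite mxE; apply/eqP.
by rewrite -sqrf_eq0; exact: v0 (mem_index_enum _).
Qed.

Lemma eigenvalue_qform m :
  eigenvalue A m -> exists2 v : 'rV_n, v != 0 & qform v = m * sumsq v.
Proof.
move/eigenvalueP => [v vA vn0]; exists v => //.
rewrite vA -scalemxAl mxE [in LHS]mxE; congr (_ * _).
by apply: eq_bigr => i _; rewrite mxE expr2.
Qed.

Hypothesis (l : R) (qform_ge : forall v : 'rV_n, l * sumsq v <= qform v).

Lemma eigenvalue_ge m : eigenvalue A m -> l <= m.
Proof.
move=> /eigenvalue_qform [v vn0 qv].
by have := qform_ge v; rewrite qv ler_pM2r ?sumsq_gt0.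
Qed.

Lemma posdef_qform_ge : 0 < l -> posdef A.
Proof.
by move=> l_gt0 v vn0; apply: lt_le_trans (qform_ge v); rewrite mulr_gt0 ?sumsq_gt0.
Qed.

End QuadraticFormBound.

Lemma sumr_delta (T : finType) (R : pzSemiRingType) (F : T -> R) k :
  \sum_i F i * (i == k)%:R = F k.
Proof.
by rewrite (bigD1 k) //= eqxx mulr1 big1 ?addr0 // => i /negbTE ->; rewrite mulr0.
Qed.

Lemma sumr_delta_sym (T : finType) (R : pzSemiRingType) (F : T -> R) k :
  \sum_i F i * (k == i)%:R = F k.
Proof. by under eq_bigr do rewrite eq_sym; apply: sumr_delta. Qed.

Lemma sumr_ordS (R : nmodType) n (F : 'I_n -> R) : \sum_k F (ordS k) = \sum_k F k.
Proof. exact/esym/(reindex_inj (@ordS_inj n)). Qed.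

Lemma ordS_invariant_eq (T : Type) n (f : 'I_n -> T) :
  (forall k, f (ordS k) = f k) -> forall i j, f i = f j.
Proof.
move=> fS i; have n0 : (0 < n)%N := leq_ltn_trans (leq0n i) (ltn_ord i).
suff fE k : f k = f (Ordinal n0) by move=> j; rewrite fE [RHS]fE.
case: k => m; elim: m => [|m IH] mn; first by congr f; apply: val_inj.
have -> : Ordinal mn = ordS (Ordinal (ltnW mn)) by apply: val_inj; rewrite /= modn_small.
by rewrite fS IH.
Qed.

Section CyclicTridiagonal.
Variables (R : realType) (n : nat) (alpha : 'I_n -> R).
Local Notation A := (cycA alpha).
Local Notation qform v := ((v *m A *m v^T) 0 0).
Local Notation sumsq v := (\sum_i v 0 i ^+ 2).

Lemma cycA_sym : A^T = A.
Proof.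
apply/matrixP => i j; rewrite !mxE eq_sym; congr (_ - _).
by apply: eq_bigr => k _; rewrite addrC.
Qed.

Lemma mul_cycA_entry (v : 'rV[R]_n) j : (v *m A) 0 j =
  v 0 j - \sum_k alpha k * (v 0 k * (j == ordS k)%:R + v 0 (ordS k) * (j == k)%:R).
Proof.
rewrite mxE; under eq_bigr do rewrite mxE mulrBr.
rewrite sumrB sumr_delta; congr (_ - _).
under eq_bigr do rewrite mulr_sumr.
rewrite exchange_big /=; apply: eq_bigr => k _.
under eq_bigr do
  rewrite -!mulnb !natrM mulrDr mulrCA (mulrCA (v 0 _) (alpha k)) -mulrDr.
rewrite -mulr_sumr big_split /=; congr (_ * _).
under eq_bigr do rewrite mulrA.
under [X in _ + X = _]eq_bigr do rewrite [_ * (_ == _)%:R]mulrC mulrA.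
by rewrite -!mulr_suml !sumr_delta [_ * (j == k)%:R]mulrC.
Qed.

Lemma cycA_qform (v : 'rV[R]_n) :
  qform v = sumsq v - 2 * \sum_k alpha k * (v 0 k * v 0 (ordS k)).
Proof.
rewrite mxE; under eq_bigr do rewrite mul_cycA_entry mxE mulrBl.
rewrite sumrB; congr (_ - _).
under eq_bigr do rewrite mulr_suml.
rewrite exchange_big /= mulr_sumr; apply: eq_bigr => k _.
under eq_bigr do rewrite -mulrA mulrDl.
rewrite -mulr_sumr big_split /=.
under eq_bigr do rewrite -mulrA [_ * v 0 _]mulrC.
under [X in _ * (_ + X)]eq_bigr do rewrite -mulrA [_ * v 0 _]mulrC.
rewrite -!mulr_sumr !sumr_delta [v 0 (ordS k) * v 0 k]mulrC.
by rewrite mulrCA -mulr2n mulr_natl.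
Qed.

Lemma cycA_qform_weighted (v : 'rV[R]_n) (t : 'I_n -> R) c :
  (forall k, t k != 0) ->
  c * sumsq v - 2 * \sum_k alpha k * (v 0 k * v 0 (ordS k)) =
  \sum_k (alpha k / t k * (t k * v 0 k - v 0 (ordS k)) ^+ 2
          + (c - alpha (ordS k) * t (ordS k) - alpha k / t k) * v 0 (ordS k) ^+ 2).
Proof.
move=> t_neq0.
have termE k : alpha k / t k * (t k * v 0 k - v 0 (ordS k)) ^+ 2
          + (c - alpha (ordS k) * t (ordS k) - alpha k / t k) * v 0 (ordS k) ^+ 2
   = (alpha k * t k * v 0 k ^+ 2 - alpha (ordS k) * t (ordS k) * v 0 (ordS k) ^+ 2)
     + (c * v 0 (ordS k) ^+ 2 - 2 * (alpha k * (v 0 k * v 0 (ordS k)))).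
  by field; apply: t_neq0.
under [RHS]eq_bigr do rewrite termE.
rewrite big_split /= sumrB (sumr_ordS (fun i => alpha i * t i * v 0 i ^+ 2)) subrr add0r.
by rewrite sumrB -!mulr_sumr (sumr_ordS (fun i => v 0 i ^+ 2)).
Qed.

Hypothesis alpha_gt0 : forall k, 0 < alpha k.

Lemma cycA_qform_ge (t : 'I_n -> R) c : (forall k, 0 < t k) ->
  (forall k, alpha k / t k + alpha (ordS k) * t (ordS k) <= c) ->
  forall v : 'rV[R]_n, (1 - c) * sumsq v <= qform v.
Proof.
move=> t_gt0 node_le v; rewrite cycA_qform.
have := cycA_qform_weighted v c (fun k => lt0r_neq0 (t_gt0 k)).
set S := \sum_i _; set P := \sum_k _; set W := \sum_k _ => SPW.
have : 0 <= W.
  apply: sumr_ge0 => k _; apply: addr_ge0; apply: mulr_ge0; rewrite ?sqr_ge0 //.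
    by rewrite divr_ge0 // ltW.
  by have := node_le k; lra.
rewrite mulrBl mul1r; lra.
Qed.

Lemma maxPair_ge k : alpha k + alpha (ordS k) <= maxPair alpha.
Proof. by rewrite /maxPair (bigD1 k) //= le_max lexx. Qed.

Lemma cycA_qform_ge_maxPair (v : 'rV[R]_n) : (1 - maxPair alpha) * sumsq v <= qform v.
Proof.
by apply: (cycA_qform_ge (t := fun _ => 1)) => // k; rewrite divr1 mulr1 maxPair_ge.
Qed.

Lemma cycA_qform_eq_maxPair (w : 'rV[R]_n) :
  qform w = (1 - maxPair alpha) * sumsq w ->
  forall k, w 0 (ordS k) = w 0 k /\
            (maxPair alpha - alpha (ordS k) - alpha k) * w 0 (ordS k) ^+ 2 = 0.
Proof.
move=> qw; have := cycA_qform_weighted w (maxPair alpha) (fun _ => oner_neq0 R).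
have -> : maxPair alpha * sumsq w - 2 * \sum_k alpha k * (w 0 k * w 0 (ordS k)) = 0.
  by move: qw; rewrite cycA_qform; set S := \sum_i _; set P := \sum_k _; lra.
have slack_ge0 k : 0 <= maxPair alpha - alpha (ordS k) - alpha k.
  by have := maxPair_ge k; lra.
have terms_ge0 k : 0 <= alpha k * (w 0 k - w 0 (ordS k)) ^+ 2 /\
    0 <= (maxPair alpha - alpha (ordS k) - alpha k) * w 0 (ordS k) ^+ 2.
  by split; apply: mulr_ge0; rewrite ?sqr_ge0 ?slack_ge0 ?(ltW (alpha_gt0 k)).
under eq_bigr do rewrite divr1 mulr1 mul1r.
move/esym/eqP; rewrite psumr_eq0 => [/allP terms0 k|k _]; last first.
  by have [] := terms_ge0 k; apply: addr_ge0.
have [ge0_1 ge0_2] := terms_ge0 k.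
move: (terms0 k (mem_index_enum _)).
rewrite paddr_eq0 // mulf_eq0 (gt_eqF (alpha_gt0 k)) /=.
by rewrite sqrf_eq0 subr_eq0 => /andP [/eqP -> /eqP ->].
Qed.

Lemma cycA_qform_eq_maxPair_periodic (w : 'rV[R]_n) : w != 0 ->
  qform w = (1 - maxPair alpha) * sumsq w -> forall i, alpha i = alpha (ordS (ordS i)).
Proof.
move=> wn0 /cycA_qform_eq_maxPair w_eq.
have w_const := @ordS_invariant_eq _ _ (fun k => w 0 k) (fun k => (w_eq k).1).
have [i0 wi0] : exists i0, w 0 i0 != 0.
  apply/existsP; apply: contraNT wn0 => /existsPn w0.
  by apply/eqP/rowP => i; rewrite mxE; apply/eqP/negPn/w0.
have pair_eq k : alpha k + alpha (ordS k) = maxPair alpha.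
  have [_ /eqP] := w_eq k; rewrite mulf_eq0 sqrf_eq0 (w_const _ i0) (negbTE wi0) orbF.
  by move/eqP; lra.
by move=> i; have := pair_eq i; have := pair_eq (ordS i); lra.
Qed.

Lemma cycA_periodic_eigenvalue : (0 < n)%N ->
  (forall i, alpha i = alpha (ordS (ordS i))) -> eigenvalue A (1 - maxPair alpha).
Proof.
move=> n_gt0 alpha2; pose i0 := Ordinal n_gt0; pose f k := alpha k + alpha (ordS k).
have fS k : f (ordS k) = f k by rewrite /f -alpha2 addrC.
have f_const := @ordS_invariant_eq _ _ f fS.
have maxPairE : maxPair alpha = f i0.
  apply/le_anti; rewrite maxPair_ge bigmax_le ?addr_ge0 ?ltW // => k _.
  by rewrite -/(f k) (f_const k i0).
apply/eigenvalueP; exists (const_mx 1); last first.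
  by apply/negP => /eqP/rowP/(_ i0)/eqP; rewrite !mxE oner_eq0.
apply/rowP => j; rewrite mul_cycA_entry !mxE.
under eq_bigr do rewrite !mxE !mul1r mulrDr.
rewrite big_split /= sumr_delta_sym.
under eq_bigr => k _ do rewrite -[k in alpha k](ordSK k).
rewrite (sumr_ordS (fun k => alpha (ord_pred k) * (j == k)%:R)) sumr_delta_sym.
by rewrite maxPairE -(f_const (ord_pred j)) /f ord_predK mulr1 addrC.
Qed.

(* The weights are 1 except on the two [a]-edges next to the [b]-edge (n-1, 0):
   [d / a] on (0, 1) and [a / d] on (n-2, n-1), where [d = 1 - l - b].  Both
   ends of the [b]-edge then get node sum exactly [1 - l], and nodes 1 and
   n-2 get [a + a^2 / d]. *)
Lemma cycA_qform_ge_two_valued (a b l : R) : (4 <= n)%N ->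
  (forall i : 'I_n, (i < n.-1)%N -> alpha i = a) ->
  (forall i : 'I_n, nat_of_ord i = n.-1 -> alpha i = b) ->
  l <= 1 - 2 * a -> l < 1 - b -> a ^+ 2 <= (1 - a - l) * (1 - b - l) ->
  forall v : 'rV[R]_n, l * sumsq v <= qform v.
Proof.
move=> n_ge4 alpha_a alpha_b la lb lab.
have alphaE k : alpha k = if nat_of_ord k == n.-1 then b else a.
  by case: eqP => [/alpha_b|k_ne]; last by apply: alpha_a; have := ltn_ord k; lia.
have ordSE (k : 'I_n) :
    nat_of_ord (ordS k) = if nat_of_ord k == n.-1 then 0%N else (nat_of_ord k).+1.
  rewrite /= -addn1; case: eqP => [->|k_ne].
    by rewrite addn1 prednK ?modnn //; lia.
  by rewrite modn_small //; have := ltn_ord k; lia.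
have a_gt0 : 0 < a.
  have := alpha_gt0 (Ordinal (leq_trans (isT : (0 < 4)%N) n_ge4)).
  by rewrite alphaE /=; case: eqP => // ?; lia.
pose c := 1 - l; pose d := c - b.
have d_gt0 : 0 < d by rewrite /d /c; lra.
have inner_le : a ^+ 2 / d + a <= c.
  by rewrite -lerBrDr ler_pdivrMr // mulrC; move: lab; rewrite /d /c; lra.
pose t (k : 'I_n) :=
  if nat_of_ord k == 0%N then d / a else if nat_of_ord k == n.-2 then a / d else 1.
have t_gt0 k : 0 < t k by rewrite /t; repeat case: ifP => _; rewrite ?divr_gt0.
have e1 : a / (d / a) = a ^+ 2 / d by field; rewrite !gt_eqF.
have e2 : a * (a / d) = a ^+ 2 / d by field; rewrite !gt_eqF.
have e3 : a * (d / a) = d by field; rewrite !gt_eqF.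
have e4 : a / (a / d) = d by field; rewrite !gt_eqF.
have two_a_le : 2 * a <= c by rewrite /c; lra.
have -> : l = 1 - c by rewrite /c; ring.
apply: (cycA_qform_ge t_gt0) => k.
rewrite /t !alphaE !ordSE; move: (nat_of_ord k) (ltn_ord k) => m lt_mn.
move: inner_le two_a_le e1 e2 e3 e4.
clear -n_ge4 lt_mn.
case: (m =P n.-1) => [->|m_ne] /=; repeat (case: eqP => ?; try lia).
all: move=> ? ? e1 e2 e3 e4; rewrite ?divr1 ?mulr1 ?e1 ?e2 ?e3 ?e4 /d; lra.
Qed.

End CyclicTridiagonal.

Lemma exists_pos_margin (R : realFieldType) (a b : R) : 0 < a -> 0 < b ->
  a < 1 / 2 -> b < 1 -> a ^+ 2 < (1 - a) * (1 - b) ->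
  exists2 e, 0 < e & [/\ e <= 1 - 2 * a, e < 1 - b & a ^+ 2 <= (1 - a - e) * (1 - b - e)].
Proof.
move=> a_gt0 b_gt0 a_lt b_lt ab_lt; pose f := (1 - a) * (1 - b) - a ^+ 2.
pose e := Num.min (f / 2) (Num.min (1 - 2 * a) ((1 - b) / 2)).
have e_gt0 : 0 < e by rewrite !lt_min; apply/and3P; split; rewrite /f; lra.
have e_le1 : e <= f / 2 by rewrite ge_min lexx.
have e_le2 : e <= 1 - 2 * a by rewrite !ge_min lexx !orbT.
have e_le3 : e <= (1 - b) / 2 by rewrite !ge_min lexx !orbT.
exists e => //; split; [by [] | lra |].
have : 0 <= e * (a + b) by apply: mulr_ge0; lra.
have : 0 <= e * e by apply: mulr_ge0; lra.
move: e_le1; rewrite /f; nra.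
Qed.

Theorem mainTheorem18 (R : realType) (n : nat) (alpha : 'I_n -> R) :
  (2 <= n)%N ->
  (forall i, 0 < alpha i) ->
  exists lmin : R,
    is_min_eigenvalue (cycA alpha) lmin /\
    (* (i) *)
    (1 - maxPair alpha <= lmin /\ (maxPair alpha < 1 -> posdef (cycA alpha))) /\
    (* (ii) *)
    (lmin = 1 - maxPair alpha <-> forall i, alpha i = alpha (ordS (ordS i))) /\
    (* (iii) *)
    (forall a b : R,
       (4 <= n)%N ->
       (forall i : 'I_n, (i < n.-1)%N -> alpha i = a) ->
       (forall i : 'I_n, nat_of_ord i = n.-1 -> alpha i = b) ->
       (forall l : R, l <= 1 - 2 * a -> l < 1 - b ->
          a ^+ 2 <= (1 - a - l) * (1 - b - l) -> l <= lmin) /\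
       (a < 1 / 2 -> b < 1 -> a ^+ 2 < (1 - a) * (1 - b) -> posdef (cycA alpha))).
Proof.
move=> n_ge2 alpha_gt0; have n_gt0 : (0 < n)%N by apply: ltnW.
have [l0 eig_l0] := symmetric_eigenvalue_exists n_gt0 (cycA_sym alpha).
have [lmin [eig_lmin lmin_le]] := min_eigenvalue_exists (ex_intro _ l0 eig_l0).
have ge_maxPair := cycA_qform_ge_maxPair alpha_gt0.
have lmin_ge_maxPair := eigenvalue_ge ge_maxPair eig_lmin.
exists lmin; split=> //; split.
  by split=> // M_lt1; apply: posdef_qform_ge ge_maxPair _; rewrite subr_gt0.
split; first split=> [lminE|alpha2].
- have [w wn0 qw] := eigenvalue_qform eig_lmin.
  by apply: (cycA_qform_eq_maxPair_periodic alpha_gt0 wn0); rewrite qw lminE.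
- apply/le_anti; rewrite lmin_ge_maxPair andbT.
  exact/lmin_le/cycA_periodic_eigenvalue.
move=> a b n_ge4 alpha_a alpha_b.
have ge_l l := @cycA_qform_ge_two_valued _ _ _ alpha_gt0 a b l n_ge4 alpha_a alpha_b.
split=> [l la lb lab|a_lt b_lt ab_lt].
  exact: eigenvalue_ge (ge_l l la lb lab) _ eig_lmin.
have a_gt0 : 0 < a by rewrite -(alpha_a (Ordinal n_gt0)) //=; lia.
have n1_lt : (n.-1 < n)%N by rewrite ltn_predL.
have b_gt0 : 0 < b by rewrite -(alpha_b (Ordinal n1_lt)).
have [e e_gt0 [ea eb eab]] := exists_pos_margin a_gt0 b_gt0 a_lt b_lt ab_lt.
exact: posdef_qform_ge (ge_l e ea eb eab) e_gt0.
Qed.
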